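(* Let $A$ be a cubical set. If the morphism $A\to A^{\mathbb{I}}$, $a\mapsto\lambda\_.a$ (the exponential transpose of the projection $A\times\mathbb{I}\to A$) is an isomorphism, then $A\cong\Delta(a)$ for some set $a$.
   Context: $\mathcal{C}$ is the category of cubes: objects finite sets of names, morphisms $I\to J$ functions $J\to\mathrm{dM}(I)$ with $\mathrm{dM}(I)$ the free De Morgan algebra on $I$, composition by substitution. Cubical sets are presheaves on $\mathcal{C}$; $\mathbb{I}$ is the presheaf $I\mapsto\mathrm{dM}(I)$. $\Delta:\mathrm{Set}\to\widehat{\mathcal{C}}$ is the constant presheaf functor. *)

From mathcomp Require Import all_boot.
Set Implicit Arguments. Unset Strict Implicit. Unset Printing Implicit Defensive.

(* Names are natural numbers; an object of C is a finite set of names,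
   represented canonically as a strictly increasing list. *)
Definition cobj := {s : seq nat | sorted ltn s}.

Definition elem (I : cobj) := {i : nat | i \in sval I}.

Inductive dm_term (V : Type) : Type :=
| dmVar of V
| dm0
| dm1
| dmMeet of dm_term V & dm_term V
| dmJoin of dm_term V & dm_term V
| dmNeg of dm_term V.
Arguments dm0 {V}. Arguments dm1 {V}.

(* The congruence generated by the axioms of De Morgan algebras
   (bounded distributive lattice + involutive De Morgan negation).
   dM(V) is dm_term V modulo dmeq. *)
Inductive dmeq {V : Type} : dm_term V -> dm_term V -> Prop :=
| dmeq_refl x : dmeq x x
| dmeq_sym x y : dmeq x y -> dmeq y x
| dmeq_trans x y z : dmeq x y -> dmeq y z -> dmeq x z
| dmeq_meet x x' y y' : dmeq x x' -> dmeq y y' -> dmeq (dmMeet x y) (dmMeet x' y')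
| dmeq_join x x' y y' : dmeq x x' -> dmeq y y' -> dmeq (dmJoin x y) (dmJoin x' y')
| dmeq_neg x x' : dmeq x x' -> dmeq (dmNeg x) (dmNeg x')
| dmeq_meetA x y z : dmeq (dmMeet x (dmMeet y z)) (dmMeet (dmMeet x y) z)
| dmeq_joinA x y z : dmeq (dmJoin x (dmJoin y z)) (dmJoin (dmJoin x y) z)
| dmeq_meetC x y : dmeq (dmMeet x y) (dmMeet y x)
| dmeq_joinC x y : dmeq (dmJoin x y) (dmJoin y x)
| dmeq_meetK x y : dmeq (dmMeet x (dmJoin x y)) x
| dmeq_joinK x y : dmeq (dmJoin x (dmMeet x y)) x
| dmeq_meet1 x : dmeq (dmMeet x dm1) x
| dmeq_join0 x : dmeq (dmJoin x dm0) x
| dmeq_meetDr x y z :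
    dmeq (dmMeet x (dmJoin y z)) (dmJoin (dmMeet x y) (dmMeet x z))
| dmeq_negK x : dmeq (dmNeg (dmNeg x)) x
| dmeq_negJ x y : dmeq (dmNeg (dmJoin x y)) (dmMeet (dmNeg x) (dmNeg y))
| dmeq_negM x y : dmeq (dmNeg (dmMeet x y)) (dmJoin (dmNeg x) (dmNeg y)).

Fixpoint dm_subst (V W : Type) (s : V -> dm_term W) (t : dm_term V) : dm_term W :=
  match t with
  | dmVar v => s v
  | dm0 => dm0
  | dm1 => dm1
  | dmMeet a b => dmMeet (dm_subst s a) (dm_subst s b)
  | dmJoin a b => dmJoin (dm_subst s a) (dm_subst s b)
  | dmNeg a => dmNeg (dm_subst s a)
  end.

(* A morphism I -> J is a function J -> dM(I) (given by representatives);
   two such are equal when they agree pointwise in dM(I). *)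
Definition hom (I J : cobj) := elem J -> dm_term (elem I).
Definition hom_eq (I J : cobj) (f g : hom I J) := forall j, dmeq (f j) (g j).
Definition hid (I : cobj) : hom I I := fun i => dmVar i.
Arguments hid I : clear implicits.
Definition hcomp (I J K : cobj) (g : hom J K) (f : hom I J) : hom I K :=
  fun k => dm_subst f (g k).

Record cset := CSet {
  cs_ob :> cobj -> Type;
  cs_res : forall I J : cobj, hom I J -> cs_ob J -> cs_ob I;
  cs_res_ext : forall I J (f g : hom I J), hom_eq f g ->
      forall x, cs_res f x = cs_res g x;
  cs_res_id : forall I x, cs_res (hid I) x = x;
  cs_res_comp : forall I J K (f : hom I J) (g : hom J K) x,
      cs_res (hcomp g f) x = cs_res f (cs_res g x)
}.
Arguments cs_res c [I J] f x.
Arguments cs_res_ext c [I J f g] _ x.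
Arguments cs_res_comp c [I J K] f g x.

Definition cs_iso (A B : cset) : Prop :=
  exists phi : forall I, A I -> B I,
    (forall I J (f : hom I J) (x : A J),
        phi I (cs_res A f x) = cs_res B f (phi J x)) /\
    (forall I, bijective (phi I)).

Definition Delta (a : Type) : cset :=
  @CSet (fun _ => a) (fun _ _ _ x => x)
        (fun _ _ _ _ _ _ => erefl) (fun _ _ => erefl)
        (fun _ _ _ _ _ _ => erefl).

(* II is the presheaf I |-> dM(I), with restriction along f given by
   substitution dm_subst f.  An element of (A^II)(I) is a natural
   transformation y(I) x II -> A, i.e. a family
   th_J : Hom(J,I) x dM(J) -> A(J), well defined on equivalence classes
   and natural in J. *)
Record exp_el (A : cset) (I : cobj) := ExpEl {
  th : forall J : cobj, hom J I -> dm_term (elem J) -> A J;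
  th_hom : forall J (f f' : hom J I) r, hom_eq f f' -> th f r = th f' r;
  th_dm : forall J (f : hom J I) r r', dmeq r r' -> th f r = th f r';
  th_nat : forall J K (g : hom K J) (f : hom J I) r,
      th (hcomp f g) (dm_subst g r) = cs_res A g (th f r)
}.

Definition const_exp (A : cset) (I : cobj) (a : A I) : exp_el A I :=
  @ExpEl A I (fun J f _ => cs_res A f a)
    (fun J f f' _ e => cs_res_ext A e a)
    (fun _ _ _ _ _ => erefl)
    (fun J K g f _ => cs_res_comp A g f a).

(* Surjectivity of A -> A^II already forces every restriction map of A to
   be trivial.  Given f, g : K -> J and x : A(J), the family
   (h, r) |-> A((f h) /\ ~r \/ (g h) /\ r)(x) is a line in A(K) running from
   A(f)(x) at r = 0 to A(g)(x) at r = 1; being in the image of a |-> \lambda _. a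
   it is constant, so A(f)(x) = A(g)(x).  Hence every A(I) is identified with
   A(0) by restriction along the unique map to (or from) the empty cube, and
   A is isomorphic to Delta(A(0)). *)
From mathcomp Require Import all_boot.
Set Implicit Arguments. Unset Strict Implicit.

Lemma dm_subst_var V (t : dm_term V) : dm_subst (@dmVar V) t = t.
Proof. by elim: t => //= [a -> b ->|a -> b ->|a ->]. Qed.

Lemma dm_subst_comp U V W (h : U -> dm_term V) (k : V -> dm_term W) t :
  dm_subst k (dm_subst h t) = dm_subst (fun v => dm_subst k (h v)) t.
Proof. by elim: t => //= [a -> b ->|a -> b ->|a ->]. Qed.

Lemma dmeq_subst V W (h h' : V -> dm_term W) t :
  (forall v, dmeq (h v) (h' v)) -> dmeq (dm_subst h t) (dm_subst h' t).
Proof.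
move=> eq_h; elim: t => /= [v|||a Ha b Hb|a Ha b Hb|a Ha].
- exact: eq_h.
- exact: dmeq_refl.
- exact: dmeq_refl.
- exact: dmeq_meet.
- exact: dmeq_join.
- exact: dmeq_neg.
Qed.

Section DeMorgan.
Variable V : Type.
Implicit Types x y r : dm_term V.

Lemma dmeq_meet0l x : dmeq (dmMeet dm0 x) dm0.
Proof.
apply: dmeq_trans (dmeq_meetK dm0 x).
apply: dmeq_meet; first exact: dmeq_refl.
by apply: dmeq_sym; apply: dmeq_trans (dmeq_joinC _ _) _; apply: dmeq_join0.
Qed.

Lemma dmeq_meet0r x : dmeq (dmMeet x dm0) dm0.
Proof. by apply: dmeq_trans (dmeq_meetC _ _) _; apply: dmeq_meet0l. Qed.

Lemma dmeq_neg1 : dmeq (dmNeg (@dm1 V)) dm0.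
Proof.
apply: dmeq_trans (dmeq_sym (dmeq_join0 _)) _.
apply: dmeq_trans (dmeq_join (dmeq_refl _) (dmeq_sym (dmeq_negK dm0))) _.
apply: dmeq_trans (dmeq_sym (dmeq_negM _ _)) _.
apply: dmeq_trans (dmeq_neg (dmeq_meetC _ _)) _.
apply: dmeq_trans (dmeq_neg (dmeq_meet1 _)) _.
exact: dmeq_negK.
Qed.

Lemma dmeq_neg0 : dmeq (dmNeg (@dm0 V)) dm1.
Proof. by apply: dmeq_trans (dmeq_neg (dmeq_sym dmeq_neg1)) _; apply: dmeq_negK. Qed.

Definition dm_interp x y r : dm_term V :=
  dmJoin (dmMeet x (dmNeg r)) (dmMeet y r).

Lemma dmeq_interp x x' y y' r r' : dmeq x x' -> dmeq y y' -> dmeq r r' ->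
  dmeq (dm_interp x y r) (dm_interp x' y' r').
Proof.
move=> ex ey er.
by apply: dmeq_join; apply: dmeq_meet => //; apply: dmeq_neg.
Qed.

Lemma dm_interp0 x y : dmeq (dm_interp x y dm0) x.
Proof.
apply: dmeq_trans (dmeq_join (dmeq_meet (dmeq_refl x) dmeq_neg0) (dmeq_meet0r y)) _.
by apply: dmeq_trans (dmeq_join0 _) _; apply: dmeq_meet1.
Qed.

Lemma dm_interp1 x y : dmeq (dm_interp x y dm1) y.
Proof.
apply: dmeq_trans (dmeq_join (dmeq_meet (dmeq_refl x) dmeq_neg1) (dmeq_meet1 y)) _.
apply: dmeq_trans (dmeq_join (dmeq_meet0r x) (dmeq_refl y)) _.
by apply: dmeq_trans (dmeq_joinC _ _) _; apply: dmeq_join0.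
Qed.

End DeMorgan.

Definition hom_interp (K J : cobj) (f g : hom K J) (r : dm_term (elem K)) : hom K J :=
  fun j => dm_interp (f j) (g j) r.

Lemma hcomp_hid (K J : cobj) (f : hom K J) j : hcomp f (hid K) j = f j.
Proof. exact: dm_subst_var. Qed.

Definition cempty : cobj := exist _ [::] isT.

Definition hom0 (I J : cobj) : hom I J := fun=> dm0.
Arguments hom0 : clear implicits.

Section ConstantRestrictions.
Variable A : cset.

Definition exp_interp (J K : cobj) (f g : hom K J) (x : A J) : exp_el A K.
Proof.
refine (@ExpEl A K
  (fun K' h r => cs_res A (hom_interp (hcomp f h) (hcomp g h) r) x) _ _ _).
- move=> K' h h' r eq_h; apply: cs_res_ext => j.
  by apply: dmeq_interp; [exact: dmeq_subst | exact: dmeq_subst | exact: dmeq_refl].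
- move=> K' h r r' eq_r; apply: cs_res_ext => j.
  by apply: dmeq_interp; [exact: dmeq_refl | exact: dmeq_refl |].
- move=> K1 K2 k h r; rewrite -cs_res_comp; apply: cs_res_ext => j.
  by rewrite /hom_interp /dm_interp /hcomp /= !dm_subst_comp; apply: dmeq_refl.
Defined.

Lemma exp_interp0 (J K : cobj) (f g : hom K J) (x : A J) :
  th (exp_interp f g x) (hid K) dm0 = cs_res A f x.
Proof.
apply: cs_res_ext => j; rewrite /hom_interp !hcomp_hid; exact: dm_interp0.
Qed.

Lemma exp_interp1 (J K : cobj) (f g : hom K J) (x : A J) :
  th (exp_interp f g x) (hid K) dm1 = cs_res A g x.
Proof.
apply: cs_res_ext => j; rewrite /hom_interp !hcomp_hid; exact: dm_interp1.
Qed.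

Lemma cs_res_const :
  (forall K (t : exp_el A K), exists a, const_exp a = t) ->
  forall J K (f g : hom K J) (x : A J), cs_res A f x = cs_res A g x.
Proof.
move=> const_exp_surj J K f g x.
have [a def_a] := const_exp_surj K (exp_interp f g x).
by rewrite -(exp_interp0 f g x) -(exp_interp1 f g x) -def_a.
Qed.

Lemma cs_iso_Delta_of_res_const :
  (forall J K (f g : hom K J) (x : A J), cs_res A f x = cs_res A g x) ->
  cs_iso A (Delta (A cempty)).
Proof.
move=> res_const; exists (fun I : cobj => cs_res A (hom0 cempty I)); split.
- by move=> I J f x /=; rewrite -cs_res_comp; apply: res_const.
- move=> I; exists (cs_res A (hom0 I cempty)) => x /=.
  + by rewrite -cs_res_comp (res_const _ _ _ (hid I)) cs_res_id.
  + by rewrite -cs_res_comp (res_const _ _ _ (hid cempty)) cs_res_id.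
Qed.

End ConstantRestrictions.

Theorem mainTheorem3 (A : cset) :
  (forall I : cobj, bijective (@const_exp A I)) ->
  exists a : Type, cs_iso A (Delta a).
Proof.
move=> const_exp_bij; exists (A cempty).
apply: cs_iso_Delta_of_res_const; apply: cs_res_const => K t.
have [inv _ const_expK] := const_exp_bij K.
by exists (inv t); rewrite const_expK.
Qed.
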